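(* Consider the parallel service system with $\lambda<\sum_{n=1}^N\mu_n$ under the softmax WSQ policy with sufficiently small temperature $\iota>0$. Then for every $w\in\mathbb{R}^N_{>0}$, the Markov chain of queue lengths induced by $\pi_w$ is irreducible, ergodic and positive Harris recurrent.
   Context: Parallel service system: $N$ parallel queues with state $x\in\mathbb{Z}^N_{\ge0}$ (queue lengths), Poisson arrivals at rate $\lambda>0$, exponential service rates $\mu_n>0$ at server $n$; an arriving job joins queue $a$ with probability $\pi_w(a\mid x)$. This gives a Markov chain with transitions $x\to x+e_a$ at rate $\lambda\pi_w(a\mid x)$ and $x\to x-e_n$ at rate $\mu_n\mathbb{I}_{\{x_n\ge1\}}$ (equivalently its embedded jump chain $x[k]$, the state after the $k$-th transition). Softmax WSQ policy with weights $w\in\mathbb{R}^N_{>0}$ and temperature $\iota>0$: $\pi_w(a\mid x)=\exp(-w_a(2x_a+1)/\iota)/\sum_{b=1}^N\exp(-w_b(2x_b+1)/\iota)$. *)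

From HB Require Import structures.
From mathcomp Require Import all_boot all_order all_algebra.
From mathcomp Require Import all_classical all_reals all_analysis.
Set Implicit Arguments. Unset Strict Implicit. Unset Printing Implicit Defensive.
Import Order.TTheory GRing.Theory Num.Theory.
Local Open Scope classical_set_scope.
Local Open Scope ring_scope.

(* P x y = one-step transition probability; succ x = a finite list containing
   every y with P x y <> 0 (used only to write the finite sums of the
   Chapman-Kolmogorov / first-passage recursions). *)
Section Chain.
Variables (R : realType) (S : countType).
Variables (P : S -> S -> R) (succ : S -> seq S).

Fixpoint nstep (n : nat) (x y : S) : R :=
  match n with
  | 0 => (x == y)%:R
  | n'.+1 => \sum_(z <- undup (succ x)) P x z * nstep n' z y
  end.

(* first-passage probability: P_x(tau_y = n), tau_y = inf {k >= 1 : X_k = y} *)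
Fixpoint fpass (n : nat) (x y : S) : R :=
  match n with
  | 0 => 0
  | n'.+1 => (n' == 0)%:R * P x y
             + \sum_(z <- undup (succ x) | z != y) P x z * fpass n' z y
  end.

Definition irreducible : Prop := forall x y : S, exists n, 0 < nstep n x y.

Definition hit_prob (x y : S) : \bar R := (\esum_(k in [set: nat]) (fpass k x y)%:E)%E.

Definition recurrent_state (x : S) : Prop := hit_prob x x = 1%E.

Definition positive_recurrent_state (x : S) : Prop :=
  recurrent_state x /\
  (\esum_(k in [set: nat]) ((k%:R * fpass k x x)%:E) < +oo)%E.

Definition ergodic : Prop := irreducible /\ forall x, positive_recurrent_state x.

Definition invariant_prob (pi : S -> R) : Prop :=
  (forall x, 0 <= pi x) /\
  (\esum_(x in [set: S]) (pi x)%:E = 1)%E /\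
  (forall y, \esum_(x in [set: S]) ((pi x * P x y)%:E) = (pi y)%:E)%E.

(* Harris recurrence w.r.t. the counting measure (the maximal irreducibility
   measure on a countable space): from every initial state every state is
   reached with probability one. *)
Definition harris_recurrent : Prop := forall x y : S, hit_prob x y = 1%E.

Definition positive_harris_recurrent : Prop :=
  harris_recurrent /\ exists pi : S -> R, invariant_prob pi.
End Chain.

Definition qstate (N : nat) := {ffun 'I_N -> nat}.

Definition incr N (x : qstate N) (a : 'I_N) : qstate N :=
  [ffun i => x i + (i == a)]%N.
Definition decr N (x : qstate N) (n : 'I_N) : qstate N :=
  [ffun i => x i - (i == n)]%N.

Definition qsucc N (x : qstate N) : seq (qstate N) :=
  [seq incr x a | a <- enum 'I_N] ++ [seq decr x n | n <- enum 'I_N].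

Section Queue.
Variables (R : realType) (N : nat) (lam : R) (mu : 'I_N -> R).

Definition softmax_wsq (w : 'I_N -> R) (iota : R) (x : qstate N) (a : 'I_N) : R :=
  expR (- (w a * (2 * (x a)%:R + 1)) / iota) /
  \sum_(b < N) expR (- (w b * (2 * (x b)%:R + 1)) / iota).

Definition qtotal_rate (x : qstate N) : R :=
  lam + \sum_(n < N) (0 < x n)%N%:R * mu n.

Definition qrate (w : 'I_N -> R) (iota : R) (x y : qstate N) : R :=
  \sum_(a < N) (y == incr x a)%:R * (lam * softmax_wsq w iota x a)
  + \sum_(n < N) ((0 < x n)%N && (y == decr x n))%:R * mu n.

Definition qjump (w : 'I_N -> R) (iota : R) (x y : qstate N) : R :=
  qrate w iota x y / qtotal_rate x.
End Queue.

From HB Require Import structures.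
From mathcomp Require Import all_boot all_order all_algebra.
From mathcomp Require Import all_classical all_reals all_analysis.
From mathcomp Require Import ring lra.
Import Order.TTheory GRing.Theory Num.Theory.
Local Open Scope classical_set_scope.
Local Open Scope ring_scope.
Set Implicit Arguments. Unset Strict Implicit. Unset Printing Implicit Defensive.

(* Foster-Lyapunov argument.  For a target state y, let K_y = taboo y be the
   one-step kernel killed on entering y.  A function g >= 0 with
   K_y g <= g - 1 bounds the partial sums of the survival probabilities
   P_x(tau_y > n), hence P_x(tau_y < oo) = 1 and E_y[tau_y] < oo; the expected
   numbers of visits before the first return to y then form a finite
   invariant measure.
   For the queue, V(x) = sum_i w_i x_i^2 is the function that WSQ greedily
   minimises: an arrival to queue a raises V by w_a (2 x_a + 1), and the
   softmax policy loses at most N iota against the best queue.  Hence the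
   drift of V is at most A - kappa sum_k mu_k w_k x_k with kappa > 0 whenever
   lambda < sum_k mu_k, so V has drift <= -1 off a finite box, at every
   temperature.  Irreducibility turns this into a function g as above. *)

Lemma sum_seq_indicator (R : nzRingType) (T : eqType) (s : seq T) (F : T -> R) u :
  uniq s -> \sum_(z <- s) (z == u)%:R * F z = (u \in s)%:R * F u.
Proof.
move=> us; case: (boolP (u \in s)) => hu.
  rewrite (bigD1_seq u) //= eqxx !mul1r big1 ?addr0 // => z /negPf ->.
  by rewrite mul0r.
rewrite big1_seq ?mul0r // => z /andP [_ hz]; case: eqP => [e|_]; last by rewrite mul0r.
by rewrite -e hz in hu.
Qed.

Lemma ler_sum_seq_term (R : numDomainType) (T : eqType) (s : seq T) (F : T -> R) z :
  uniq s -> z \in s -> (forall w, 0 <= F w) -> F z <= \sum_(w <- s) F w.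
Proof.
by move=> us zs F0; rewrite (bigD1_seq z) //= lerDl; apply: sumr_ge0 => w _.
Qed.

Lemma esumZl (R : realType) (T : choiceType) (I : set T) (a : T -> \bar R) (r : R) :
  0 <= r -> (forall i, 0 <= a i)%E ->
  (\esum_(i in I) (r%:E * a i) = r%:E * \esum_(i in I) a i)%E.
Proof.
move=> r0 a0; rewrite /esum -ereal_supZl //; last first.
  by apply/set0P; exists 0%E; exists set0 => //; [exact: fsets_set0 | rewrite fsbig_set0].
congr ereal_sup; rewrite image_comp; apply: eq_imagel => X [finX XI] /=.
by rewrite !fsbig_finite // ge0_sume_distrr.
Qed.

Lemma esum_swap (R : realType) (T1 T2 : choiceType) (a : T1 -> T2 -> \bar R) :
  (forall i j, 0 <= a i j)%E ->
  (\esum_(i in [set: T1]) \esum_(j in [set: T2]) a i j =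
   \esum_(j in [set: T2]) \esum_(i in [set: T1]) a i j)%E.
Proof.
move=> a0; rewrite !esum_esum //.
rewrite (reindex_esum ([set: T2] `*`` (fun _ => [set: T1])) _ (fun x => (x.2, x.1))) //.
split=> //=.
- by move=> [i1 i2] [j1 j2] /= _ _ [] -> ->.
- by move=> [i1 i2] _ /=; exists (i2, i1).
Qed.

Lemma esum_shift (R : realType) (a : nat -> \bar R) : (forall n, 0 <= a n)%E ->
  (\esum_(n in [set: nat]) a n = a 0%N + \esum_(n in [set: nat]) a n.+1)%E.
Proof.
move=> a0; rewrite -!nneseries_esumT //.
rewrite (nneseries_split 0 1) // add0n big_nat1; congr (_ + _)%E.
rewrite -nneseries_addn //; apply: congr_lim; apply: funext => n /=.
by apply: eq_bigr => i _; rewrite addn1.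
Qed.

Lemma mul_expRN_le1 (R : realType) (t : R) : t * expR (- t) <= 1.
Proof. by rewrite expRN ler_pdivrMr ?expR_gt0 // mul1r; have := expR_ge1Dx t; lra. Qed.

Lemma expR_div_tradeoff (R : realType) (u i : R) : 0 < i -> expR (- u / i) * u <= i.
Proof.
move=> i0; have -> : expR (- u / i) * u = i * (u / i * expR (- (u / i))).
  by rewrite mulNr; field; rewrite gt_eqF.
by rewrite -[X in _ <= X]mulr1 ler_pM2l // mul_expRN_le1.
Qed.

Section TabooKernel.
Variables (R : realType) (S : countType) (P : S -> S -> R) (succ : S -> seq S).
Hypothesis P_ge0 : forall x z, 0 <= P x z.
Hypothesis P_supp : forall x z, z \notin succ x -> P x z = 0.
Hypothesis P_sum1 : forall x, \sum_(z <- undup (succ x)) P x z = 1.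

Definition trans_op (f : S -> R) (x : S) : R :=
  \sum_(z <- undup (succ x)) P x z * f z.

Definition taboo (y : S) (f : S -> R) (x : S) : R :=
  \sum_(z <- undup (succ x) | z != y) P x z * f z.

Fixpoint taboo_iter (y : S) (n : nat) (f : S -> R) : S -> R :=
  if n is n'.+1 then taboo y (taboo_iter y n' f) else f.

(* surv y n x = P_x(tau_y > n), where tau_y is the first hitting time of y
   after time 0. *)
Definition surv (y : S) (n : nat) : S -> R := taboo_iter y n (fun _ => 1).

Lemma taboo_ge0 y f : (forall z, 0 <= f z) -> forall x, 0 <= taboo y f x.
Proof. by move=> f0 x; apply: sumr_ge0 => z _; apply: mulr_ge0. Qed.

Lemma ler_taboo y f g : (forall z, f z <= g z) -> forall x, taboo y f x <= taboo y g x.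
Proof. by move=> fg x; apply: ler_sum => z _; apply: ler_wpM2l. Qed.

Lemma taboo_iter_ge0 y n f : (forall z, 0 <= f z) -> forall x, 0 <= taboo_iter y n f x.
Proof. by elim: n => [//|n IH] f0 x /=; apply: taboo_ge0 => z; apply: IH. Qed.

Lemma ler_taboo_iter y n f g :
  (forall z, f z <= g z) -> forall x, taboo_iter y n f x <= taboo_iter y n g x.
Proof. by elim: n => [//|n IH] fg x /=; apply: ler_taboo => z; apply: IH. Qed.

Lemma taboo_iterSr y n f : taboo_iter y n.+1 f = taboo_iter y n (taboo y f).
Proof. by elim: n => [//|n IH] /=; rewrite -IH. Qed.

Lemma taboo_iter_cst0 y n : taboo_iter y n (fun _ => 0) = (fun _ => 0).
Proof.
elim: n => [//|n IH] /=; rewrite IH; apply: funext => x.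
by rewrite /taboo big1 // => z _; rewrite mulr0.
Qed.

Lemma taboo_lin y a f g x :
  taboo y (fun z => a * f z + g z) x = a * taboo y f x + taboo y g x.
Proof.
rewrite /taboo mulr_sumr -big_split /=; apply: eq_bigr => z _.
by rewrite mulrDr mulrCA.
Qed.

Lemma tabooB y f g x : taboo y (fun z => f z - g z) x = taboo y f x - taboo y g x.
Proof. by rewrite /taboo -sumrB /=; apply: eq_bigr => z _; rewrite mulrBr. Qed.

Lemma taboo_sum y m (F : nat -> S -> R) x :
  taboo y (fun z => \sum_(k < m) F k z) x = \sum_(k < m) taboo y (F k) x.
Proof. by rewrite /taboo exchange_big /=; apply: eq_bigr => z _; rewrite mulr_sumr. Qed.

Lemma taboo_le_trans_op y f x : (forall z, 0 <= f z) -> taboo y f x <= trans_op f x.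
Proof.
move=> f0; rewrite /taboo /trans_op [X in X <= _]big_mkcond /=.
by apply: ler_sum => z _; case: (_ != _) => //; apply: mulr_ge0.
Qed.

Lemma taboo1 y x : taboo y (fun _ => 1) x = 1 - P x y.
Proof.
rewrite /taboo; under eq_bigr do rewrite mulr1.
have := P_sum1 x; case: (boolP (y \in succ x)) => hy.
  by rewrite (bigD1_seq y) ?undup_uniq ?mem_undup //=; lra.
rewrite P_supp // subr0 => <-; rewrite big_seq_cond [RHS]big_seq; apply: eq_bigl => z.
case: (boolP (z \in _)) => //= hz; apply/eqP => e.
by rewrite e mem_undup (negPf hy) in hz.
Qed.

Lemma taboo_ge_term y f x z :
  z != y -> (forall w, 0 <= f w) -> P x z * f z <= taboo y f x.
Proof.
move=> zy f0; case: (boolP (z \in succ x)) => hz; last first.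
  by rewrite P_supp // mul0r; apply: taboo_ge0.
rewrite /taboo big_mkcond /=.
apply: le_trans (ler_sum_seq_term (z := z) (undup_uniq _) _ _); first by rewrite zy.
  by rewrite mem_undup.
by move=> w; case: (_ != _) => //; apply: mulr_ge0.
Qed.

Lemma surv_ge0 y n x : 0 <= surv y n x.
Proof. exact: taboo_iter_ge0. Qed.

Lemma surv_le1 y n x : surv y n x <= 1.
Proof.
elim: n x => [//|n IH] x.
apply: (@le_trans _ _ (taboo y (fun _ => 1) x)); first exact: (ler_taboo y IH).
by rewrite taboo1; have := P_ge0 x y; lra.
Qed.

Lemma surv_leS y n x : surv y n.+1 x <= surv y n x.
Proof.
elim: n x => [|n IH] x; first exact: surv_le1.
exact: (ler_taboo y IH).
Qed.

Lemma surv_le_mono y m n x : (m <= n)%N -> surv y n x <= surv y m x.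
Proof.
move=> /subnKC <-; elim: (n - m)%N => [|k IH]; first by rewrite addn0.
by rewrite addnS; apply: le_trans (surv_leS _ _ _) IH.
Qed.

Lemma fpass0 x y : fpass P succ 0 x y = 0. Proof. by []. Qed.

Lemma fpass1 x y : fpass P succ 1 x y = P x y.
Proof. by rewrite /= mul1r big1 ?addr0 // => z _; rewrite mulr0. Qed.

Lemma fpassSS n x y :
  fpass P succ n.+2 x y = taboo y (fun z => fpass P succ n.+1 z y) x.
Proof. by rewrite [LHS]/= mul0r add0r. Qed.

Lemma fpass_taboo_iter n x y : fpass P succ n.+1 x y = taboo_iter y n (P^~ y) x.
Proof.
elim: n x => [|n IH] x; first exact: fpass1.
by rewrite fpassSS /=; congr taboo; apply: funext => z; exact: IH.
Qed.

Lemma fpassS_surv n x y : fpass P succ n.+1 x y = surv y n x - surv y n.+1 x.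
Proof.
elim: n x => [|n IH] x; first by rewrite fpass1 /surv /= taboo1; lra.
rewrite fpassSS (_ : (fun z => _) = (fun z => surv y n z - surv y n.+1 z)).
  exact: tabooB.
by apply: funext => z; rewrite IH.
Qed.

Lemma fpass_ge0 n x y : 0 <= fpass P succ n x y.
Proof. by case: n => [|n] //; rewrite fpassS_surv subr_ge0 surv_leS. Qed.

Lemma sum_fpass n x y : \sum_(k < n.+1) fpass P succ k x y = 1 - surv y n x.
Proof.
elim: n => [|n IH]; first by rewrite big_ord1 fpass0 /surv /= subrr.
by rewrite big_ord_recr IH fpassS_surv /=; lra.
Qed.

(* Abel summation: sum_k k P(tau = k) = sum_j P(tau > j) up to the tail term. *)
Lemma sum_natr_fpass n x y :
  \sum_(k < n.+1) k%:R * fpass P succ k x y + n%:R * surv y n x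
  = \sum_(j < n) surv y j x.
Proof.
elim: n => [|n IH]; first by rewrite big_ord1 big_ord0 !mul0r addr0.
rewrite big_ord_recr [RHS]big_ord_recr -IH fpassS_surv /= -!addrA; congr (_ + _).
by rewrite mulrBr [_.+1%:R]mulrSr; lra.
Qed.

Lemma foster_sum_surv_le y g :
  (forall x, 0 <= g x) -> (forall x, taboo y g x <= g x - 1) ->
  forall n x, \sum_(k < n) surv y k x <= g x.
Proof.
move=> g0 hg; elim=> [|n IH] x; first by rewrite big_ord0.
rewrite big_ord_recl.
have -> : \sum_(i < n) surv y (bump 0 i) x = taboo y (fun z => \sum_(k < n) surv y k z) x.
  by rewrite taboo_sum.
by have := hg x; have := ler_taboo y IH x; rewrite /surv /=; lra.
Qed.

Section BoundedSurvival.
Variables (x y : S) (G : R).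
Hypothesis sum_surv_le : forall n, \sum_(k < n) surv y k x <= G.

Lemma natr_surv_le n : n%:R * surv y n x <= G.
Proof.
apply: le_trans (sum_surv_le n).
have -> : n%:R * surv y n x = \sum_(k < n) surv y n x.
  by rewrite sumr_const card_ord mulr_natl.
by apply: ler_sum => k _; apply: surv_le_mono; apply: ltnW.
Qed.

Lemma hit_prob_eq1 : hit_prob P succ x y = 1%E.
Proof.
rewrite /hit_prob -nneseries_esumT; last by move=> n; rewrite lee_fin fpass_ge0.
set L := (\sum_(0 <= k <oo) _)%E.
have L0 : (0 <= L)%E by apply: nneseries_ge0 => n _ _; rewrite lee_fin fpass_ge0.
have L1 : (L <= 1)%E.
  apply: lime_le; first by apply: is_cvg_nneseries => n _ _; rewrite lee_fin fpass_ge0.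
  apply: nearW => n; rewrite sumEFin lee_fin.
  case: n => [|n]; first by rewrite big_geq.
  by rewrite big_mkord sum_fpass; have := surv_ge0 y n x; lra.
have Lge n : ((1 - surv y n x)%:E <= L)%E.
  rewrite -sum_fpass -(big_mkord xpredT (fun k => fpass P succ k x y)) -sumEFin.
  by apply: nneseries_lim_ge => k _ _; rewrite lee_fin fpass_ge0.
have Lfin : L \is a fin_num by rewrite ge0_fin_numE // (le_lt_trans L1) // ltry.
rewrite -(fineK Lfin) in L1 Lge *; set l := fine L in L1 Lge *.
rewrite lee_fin in L1; congr (_%:E).
have {}Lge n : 1 - surv y n x <= l by rewrite -lee_fin.
(* If l < 1 then surv y n x >= 1 - l for all n, contradicting n * surv y n x <= G. *)
apply/eqP; rewrite eq_le L1 /= leNgt; apply/negP => hl.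
have e0 : 0 < 1 - l by rewrite subr_gt0.
have G0 : 0 <= G by have := sum_surv_le 0; rewrite big_ord0.
have := archi_boundP (divr_ge0 G0 (ltW e0)); set n := Num.bound _ => hn.
have : n%:R * (1 - l) <= G.
  by apply: le_trans (natr_surv_le n); apply: ler_wpM2l => //; have := Lge n; lra.
by rewrite -ler_pdivlMr //; lra.
Qed.

End BoundedSurvival.

Lemma mean_return_lt_oo x G : (forall n, \sum_(k < n) surv x k x <= G) ->
  (\esum_(k in [set: nat]) ((k%:R * fpass P succ k x x)%:E) < +oo)%E.
Proof.
move=> hG; rewrite -nneseries_esumT; last first.
  by move=> n; rewrite lee_fin mulr_ge0 // fpass_ge0.
apply: (@le_lt_trans _ _ G%:E); last exact: ltry.
apply: lime_le.
  by apply: is_cvg_nneseries => n _ _; rewrite lee_fin mulr_ge0 // fpass_ge0.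
apply: nearW => n; rewrite sumEFin lee_fin.
case: n => [|n]; first by rewrite big_geq //; have := hG 0%N; rewrite big_ord0.
rewrite big_mkord; apply: le_trans (hG n).
by rewrite -sum_natr_fpass lerDl; apply: mulr_ge0 => //; exact: surv_ge0.
Qed.

Inductive reach : S -> S -> Prop :=
| reach0 x : reach x x
| reachS x z y : 0 < P x z -> reach z y -> reach x y.

Lemma reach_trans x z y : reach x z -> reach z y -> reach x y.
Proof. by elim=> [//|x1 z1 y1 h _ IH] hy; apply: reachS h _; exact: IH. Qed.

Lemma P_gt0_succ x z : 0 < P x z -> z \in undup (succ x).
Proof.
move=> h; rewrite mem_undup; apply/negPn/negP => hn.
by rewrite P_supp // ltxx in h.
Qed.

Lemma nstep_ge0 n x y : 0 <= nstep P succ n x y.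
Proof.
elim: n x => [|n IH] x /=; first by case: (_ == _).
by apply: sumr_ge0 => z _; apply: mulr_ge0.
Qed.

Lemma reach_nstep x y : reach x y -> exists n, 0 < nstep P succ n x y.
Proof.
elim=> [x1|x1 z y1 h _ [n hn]]; first by exists 0%N; rewrite /= eqxx.
exists n.+1 => /=.
apply: lt_le_trans (ler_sum_seq_term (undup_uniq (succ x1)) (P_gt0_succ h) _).
  exact: mulr_gt0.
by move=> w; apply: mulr_ge0 => //; apply: nstep_ge0.
Qed.

Lemma reach_surv_lt1 x y : reach x y -> x != y -> exists n, surv y n x < 1.
Proof.
elim=> [x1|x1 z y1 h _ IH]; first by rewrite eqxx.
move=> _; case: (eqVneq z y1) => [<-|zy].
  by exists 1%N; rewrite /surv /= taboo1; lra.
have [m hm] := IH zy; exists m.+1.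
have hge : P x1 z * (1 - surv y1 m z) <= taboo y1 (fun _ => 1) x1 - taboo y1 (surv y1 m) x1.
  by rewrite -tabooB; apply: taboo_ge_term => // w; rewrite subr_ge0 surv_le1.
rewrite taboo1 in hge; change (taboo y1 (surv y1 m) x1 < 1).
have : 0 < P x1 z * (1 - surv y1 m z) by apply: mulr_gt0; lra.
by have := P_ge0 x1 y1; lra.
Qed.

Definition delta (z : S) : S -> R := fun x => (x == z)%:R.

Lemma esum_taboo_iter_delta y n h x : (forall z, 0 <= h z) ->
  (\esum_(z in [set: S]) ((taboo_iter y n (delta z) x * h z)%:E) =
   (taboo_iter y n h x)%:E)%E.
Proof.
move=> h0; elim: n x => [|n IH] x /=.
  transitivity (\esum_(z in [set x]) (h z)%:E)%E; last by rewrite esum_set1 // lee_fin.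
  rewrite [RHS]esum_mkcond; apply: eq_esum => z _ /=; rewrite /delta.
  case: (eqVneq x z) => [<-|ne]; first by rewrite mem_set // mul1r.
  by rewrite memNset ?mul0r // => /= e; rewrite e eqxx in ne.
rewrite /taboo.
transitivity (\esum_(z in [set: S]) \sum_(u <- undup (succ x) | u != y)
   ((P x u)%:E * (taboo_iter y n (delta z) u * h z)%:E))%E.
  apply: eq_esum => z _; rewrite mulr_suml -sumEFin; apply: eq_bigr => u _.
  by rewrite -EFinM mulrA.
rewrite esum_sum; last first.
  move=> z u _ _; apply: mule_ge0; rewrite lee_fin //; apply: mulr_ge0 => //.
  by apply: taboo_iter_ge0 => v; rewrite /delta.
rewrite -sumEFin; apply: eq_bigr => u _.
rewrite esumZl // ?IH -?EFinM // => z; rewrite lee_fin; apply: mulr_ge0 => //.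
by apply: taboo_iter_ge0 => v; rewrite /delta.
Qed.

Section Occupation.
Variable y : S.

(* visits n z = P_y(X_n = z, tau_y > n); occupation z is the expected number
   of visits to z during [0, tau_y). *)
Definition visits (n : nat) (z : S) : R := taboo_iter y n (delta z) y.
Definition occupation (z : S) : \bar R := (\esum_(n in [set: nat]) (visits n z)%:E)%E.

Lemma visits_ge0 n z : 0 <= visits n z.
Proof. by apply: taboo_iter_ge0 => w; rewrite /delta. Qed.

Lemma occupation_ge0 z : (0 <= occupation z)%E.
Proof. by apply: esum_ge0 => n _; rewrite lee_fin visits_ge0. Qed.

Lemma occupation_le z : (occupation z <= \esum_(n in [set: nat]) (surv y n y)%:E)%E.
Proof.
apply: le_esum => n _; rewrite lee_fin; apply: ler_taboo_iter => w; rewrite /delta.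
by case: (_ == _).
Qed.

Lemma esum_occupation :
  (\esum_(z in [set: S]) occupation z = \esum_(n in [set: nat]) (surv y n y)%:E)%E.
Proof.
rewrite /occupation esum_swap; last by move=> z n; rewrite lee_fin visits_ge0.
apply: eq_esum => n _; rewrite -(esum_taboo_iter_delta y n (h := fun _ => 1)) //.
by apply: eq_esum => z _; rewrite mulr1.
Qed.

Lemma esum_occupation_P u :
  (\esum_(z in [set: S]) (occupation z * (P z u)%:E) =
   \esum_(n in [set: nat]) (taboo_iter y n (P^~ u) y)%:E)%E.
Proof.
transitivity (\esum_(z in [set: S]) \esum_(n in [set: nat]) (visits n z * P z u)%:E)%E.
  apply: eq_esum => z _; rewrite /occupation muleC -esumZl //; last first.
    by move=> n; rewrite lee_fin visits_ge0.
  by apply: eq_esum => n _; rewrite -EFinM mulrC.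
rewrite esum_swap; last by move=> z n; rewrite lee_fin mulr_ge0 // visits_ge0.
by apply: eq_esum => n _; apply: esum_taboo_iter_delta.
Qed.

Lemma occupation_shift z : occupation z =
  ((y == z)%:R%:E + \esum_(n in [set: nat]) (taboo_iter y n (taboo y (delta z)) y)%:E)%E.
Proof.
rewrite /occupation esum_shift; last by move=> n; rewrite lee_fin visits_ge0.
by congr (_ + _)%E; apply: eq_esum => n _; rewrite /visits taboo_iterSr.
Qed.

Lemma occupation_invariant u : hit_prob P succ y y = 1%E ->
  (\esum_(z in [set: S]) (occupation z * (P z u)%:E) = occupation u)%E.
Proof.
move=> hy; rewrite esum_occupation_P occupation_shift.
case: (eqVneq u y) => [->|uy].
  have -> : taboo y (delta y) = (fun _ => 0).
    apply: funext => x; rewrite /taboo big1 // => z /negPf.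
    by rewrite /delta => ->; rewrite mulr0.
  rewrite [X in (_ + X)%E]esum1 ?adde0 ?eqxx; last by move=> n _; rewrite taboo_iter_cst0.
  transitivity (hit_prob P succ y y); last by rewrite hy.
  rewrite /hit_prob [RHS]esum_shift ?fpass0 ?add0e; last by move=> n; rewrite lee_fin fpass_ge0.
  by apply: eq_esum => n _; rewrite fpass_taboo_iter.
rewrite add0e; apply: eq_esum => n _; congr (_%:E); congr taboo_iter.
apply: funext => x; rewrite /taboo big_mkcond /=.
rewrite (eq_bigr (fun z => (z == u)%:R * P x z)); last first.
  move=> z _; rewrite /delta; case: (eqVneq z u) => [->|zu]; first by rewrite uy mul1r mulr1.
  by case: (_ != _); rewrite ?mulr0 ?mul0r.
rewrite sum_seq_indicator ?undup_uniq // mem_undup.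
by case: (boolP (u \in succ x)) => hu; rewrite ?mul1r // mul0r P_supp.
Qed.

Lemma invariant_prob_exists G : hit_prob P succ y y = 1%E ->
  (forall n, \sum_(k < n) surv y k y <= G) -> exists pi, invariant_prob P pi.
Proof.
move=> hy hG; set Z := (\esum_(n in [set: nat]) (surv y n y)%:E)%E.
have surv_ge0E n : (0 <= (surv y n y)%:E)%E by rewrite lee_fin surv_ge0.
have Z1 : (1 <= Z)%E.
  rewrite /Z -nneseries_esumT //.
  by apply: le_trans (nneseries_lim_ge 1 _) => //; rewrite big_nat1.
have ZG : (Z <= G%:E)%E.
  rewrite /Z -nneseries_esumT //.
  apply: lime_le; first exact: is_cvg_nneseries.
  by apply: nearW => n; rewrite sumEFin lee_fin big_mkord.
have Zfin : Z \is a fin_num by rewrite ge0_fin_numE ?(le_trans _ Z1) // (le_lt_trans ZG) ?ltry.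
have occ_fin z : occupation z \is a fin_num.
  rewrite ge0_fin_numE ?occupation_ge0 //.
  by rewrite (le_lt_trans (occupation_le z)) // -/Z (le_lt_trans ZG) // ltry.
set c := fine Z; have c1 : 1 <= c by rewrite -lee_fin /c fineK.
have hpi x : ((fine (occupation x) / c)%:E = (c^-1)%:E * occupation x)%E.
  by rewrite mulrC EFinM fineK.
exists (fun x => fine (occupation x) / c); split; [|split].
- by move=> x; apply: divr_ge0; [apply: fine_ge0; apply: occupation_ge0 | lra].
- under eq_esum do rewrite hpi.
  rewrite esumZl ?invr_ge0; [|lra|exact: occupation_ge0].
  by rewrite esum_occupation -/Z -(fineK Zfin) -EFinM mulVf // gt_eqF //; lra.
- move=> u; rewrite hpi.
  under eq_esum do rewrite EFinM hpi -muleA.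
  rewrite esumZl ?invr_ge0; [|lra|]; last first.
    by move=> x; apply: mule_ge0; rewrite ?occupation_ge0 ?lee_fin.
  by rewrite occupation_invariant.
Qed.

End Occupation.

(* Inside F, the penalty is supplied by a multiple of
   the truncated hitting time E_x[min(tau_y, horizon)], whose one-step decrease
   is uniformly positive on F by irreducibility. *)
Section FosterFiniteSet.
Variables (F : seq S) (V : S -> R) (D : R) (y : S).
Hypothesis reach_y : forall x, reach x y.
Hypothesis V_ge0 : forall x, 0 <= V x.
Hypothesis D_ge0 : 0 <= D.
Hypothesis drift_le : forall x, trans_op V x <= V x + D.
Hypothesis drift_out : forall x, x \notin F -> trans_op V x <= V x - 1.

Lemma exists_horizon x : exists n, (x \in F) && (x != y) ==> (surv y n x < 1).
Proof.
case: (eqVneq x y) => [_|xy]; first by exists 0%N; rewrite andbF.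
by have [n hn] := reach_surv_lt1 (reach_y x) xy; exists n; rewrite hn implybT.
Qed.

Definition horizon : nat := (\max_(x <- F) xchoose (exists_horizon x))%N.

Lemma surv_horizon_lt1 x : x \in F -> x != y -> surv y horizon x < 1.
Proof.
move=> xF xy; have hlt : surv y (xchoose (exists_horizon x)) x < 1.
  by move/implyP: (xchooseP (exists_horizon x)); apply; rewrite xF.
apply: le_lt_trans hlt; apply: surv_le_mono.
by apply: (leq_bigmax_seq (P := xpredT)).
Qed.

Definition escape_weight : R :=
  (1 + D) * \sum_(x <- undup F | x != y) (1 - surv y horizon x)^-1.

Definition trunc_time (x : S) : R := \sum_(k < horizon) surv y k x.

Definition foster_base (x : S) : R := escape_weight * trunc_time x + V x.

Definition foster_fun (x : S) : R :=
  foster_base x + (x == y)%:R * (taboo y foster_base y + 1).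

Lemma escape_weight_ge0 : 0 <= escape_weight.
Proof.
apply: mulr_ge0; first exact: addr_ge0.
by apply: sumr_ge0 => x _; rewrite invr_ge0 subr_ge0 surv_le1.
Qed.

Lemma escape_weight_in x : x \in F -> x != y ->
  1 + D <= escape_weight * (1 - surv y horizon x).
Proof.
move=> xF xy; have h1s : 0 < 1 - surv y horizon x by rewrite subr_gt0 surv_horizon_lt1.
rewrite /escape_weight -mulrA -[X in X <= _]mulr1; apply: ler_wpM2l; first exact: addr_ge0.
rewrite -ler_pdivrMr // div1r big_mkcond /=.
apply: le_trans (ler_sum_seq_term (z := x) (undup_uniq F) _ _); first by rewrite xy.
  by rewrite mem_undup.
by move=> z; case: (_ != _) => //; rewrite invr_ge0 subr_ge0 surv_le1.
Qed.

Lemma trunc_time_ge0 x : 0 <= trunc_time x.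
Proof. by apply: sumr_ge0 => k _; exact: surv_ge0. Qed.

Lemma taboo_trunc_time x :
  taboo y trunc_time x = trunc_time x - 1 + surv y horizon x.
Proof.
rewrite /trunc_time taboo_sum.
have e1 : \sum_(k < horizon.+1) surv y k x = 1 + \sum_(k < horizon) taboo y (surv y k) x.
  by rewrite big_ord_recl.
have e2 : \sum_(k < horizon.+1) surv y k x = \sum_(k < horizon) surv y k x + surv y horizon x.
  by rewrite big_ord_recr.
lra.
Qed.

Lemma foster_base_ge0 x : 0 <= foster_base x.
Proof.
by apply: addr_ge0 => //; apply: mulr_ge0; [exact: escape_weight_ge0 | exact: trunc_time_ge0].
Qed.

Lemma foster_fun_ge0 x : 0 <= foster_fun x.
Proof.
apply: addr_ge0; first exact: foster_base_ge0.
apply: mulr_ge0; first by case: (_ == _).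
by have := taboo_ge0 y foster_base_ge0 y; lra.
Qed.

Lemma foster_fun_drift x : taboo y foster_fun x <= foster_fun x - 1.
Proof.
have -> : taboo y foster_fun x = taboo y foster_base x.
  by rewrite /taboo; apply: eq_bigr => z zy; rewrite /foster_fun (negPf zy) mul0r addr0.
rewrite /foster_fun; case: (eqVneq x y) => [->|xy].
  by rewrite mul1r; have := foster_base_ge0 y; lra.
rewrite mul0r addr0.
have -> : taboo y foster_base x = escape_weight * taboo y trunc_time x + taboo y V x.
  by rewrite -taboo_lin.
rewrite taboo_trunc_time /foster_base.
have hV := taboo_le_trans_op y x V_ge0.
have hs := surv_le1 y horizon x; have hB := escape_weight_ge0.
case: (boolP (x \in F)) => xF.
  by have := escape_weight_in xF xy; have := drift_le x; lra.
have := drift_out xF.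
have : escape_weight * (surv y horizon x - 1) <= 0 by apply: mulr_ge0_le0 => //; lra.
lra.
Qed.

Lemma foster_taboo_drift :
  exists g, (forall x, 0 <= g x) /\ forall x, taboo y g x <= g x - 1.
Proof. by exists foster_fun; split; [exact: foster_fun_ge0 | exact: foster_fun_drift]. Qed.

End FosterFiniteSet.

Theorem positive_harris_of_foster (y0 : S) (F : seq S) (V : S -> R) (D : R) :
  (forall x y, reach x y) -> (forall x, 0 <= V x) -> 0 <= D ->
  (forall x, trans_op V x <= V x + D) ->
  (forall x, x \notin F -> trans_op V x <= V x - 1) ->
  [/\ irreducible P succ, ergodic P succ & positive_harris_recurrent P succ].
Proof.
move=> hr V0 D0 hle hout.
have hbd y x : exists G, forall n, \sum_(k < n) surv y k x <= G.
  have [g [g0 hg]] := foster_taboo_drift (hr^~ y) V0 D0 hle hout.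
  by exists (g x) => n; apply: foster_sum_surv_le.
have hhit x y : hit_prob P succ x y = 1%E.
  by have [G hG] := hbd y x; exact: hit_prob_eq1 hG.
have irr : irreducible P succ by move=> x y; apply: reach_nstep.
split=> //.
- split=> // x; split; first exact: hhit.
  by have [G hG] := hbd x x; exact: mean_return_lt_oo hG.
- split; first by move=> x y; exact: hhit.
  by have [G hG] := hbd y0 y0; exact: invariant_prob_exists (hhit y0 y0) hG.
Qed.

End TabooKernel.

Lemma lt0n_of_sum_gt0 (R : numDomainType) (N : nat) (mu : 'I_N -> R) :
  0 < \sum_(n < N) mu n -> (0 < N)%N.
Proof. by case: N mu => [|//] mu; rewrite big_ord0 ltxx. Qed.

Section WSQ.
Variables (R : realType) (N : nat) (lam : R) (mu w : 'I_N -> R) (iota : R).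
Hypotheses (lam_gt0 : 0 < lam) (mu_gt0 : forall n, 0 < mu n) (w_gt0 : forall a, 0 < w a).
Hypotheses (iota_gt0 : 0 < iota) (N_gt0 : (0 < N)%N) (lam_lt_mu : lam < \sum_n mu n).

Local Notation P := (qjump lam mu w iota).
Local Notation pol := (softmax_wsq w iota).
Local Notation Lam := (qtotal_rate lam mu).
Local Notation trans_op := (trans_op P (@qsucc N)).

Lemma lam_le_total_rate x : lam <= Lam x.
Proof.
rewrite /qtotal_rate lerDl; apply: sumr_ge0 => n _; apply: mulr_ge0 => //.
exact: ltW.
Qed.

Lemma total_rate_gt0 x : 0 < Lam x.
Proof. exact: lt_le_trans lam_gt0 (lam_le_total_rate x). Qed.

Lemma total_rate_le x : Lam x <= lam + \sum_n mu n.
Proof.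
rewrite /qtotal_rate lerD2l; apply: ler_sum => n _.
by case: (0 < x n)%N; rewrite ?mul1r ?mul0r //; exact: ltW.
Qed.

(* wsq_cost x a = V(x + e_a) - V(x) for the Lyapunov function qlyap below. *)
Definition wsq_cost (x : qstate N) (a : 'I_N) : R := w a * (2 * (x a)%:R + 1).
Definition wsq_weight (x : qstate N) (a : 'I_N) : R := expR (- wsq_cost x a / iota).

Lemma softmax_wsqE x a : pol x a = wsq_weight x a / \sum_b wsq_weight x b.
Proof. by []. Qed.

Lemma wsq_weight_gt0 x a : 0 < wsq_weight x a.
Proof. exact: expR_gt0. Qed.

Lemma wsq_weight_le_sum x k : wsq_weight x k <= \sum_b wsq_weight x b.
Proof.
by rewrite (bigD1 k) //= lerDl; apply: sumr_ge0 => b _; exact: ltW (wsq_weight_gt0 _ _).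
Qed.

Lemma sum_wsq_weight_gt0 x : 0 < \sum_b wsq_weight x b.
Proof. exact: lt_le_trans (wsq_weight_gt0 x (Ordinal N_gt0)) (wsq_weight_le_sum _ _). Qed.

Lemma softmax_gt0 x a : 0 < pol x a.
Proof. by rewrite softmax_wsqE divr_gt0 ?wsq_weight_gt0 ?sum_wsq_weight_gt0. Qed.

Lemma sum_softmax x : \sum_a pol x a = 1.
Proof. by rewrite -mulr_suml mulfV // gt_eqF // sum_wsq_weight_gt0. Qed.

Lemma softmax_le_ratio x a k :
  pol x a <= expR (- (wsq_cost x a - wsq_cost x k) / iota).
Proof.
have -> : expR (- (wsq_cost x a - wsq_cost x k) / iota) = wsq_weight x a / wsq_weight x k.
  by rewrite /wsq_weight -expRN -expRD; congr expR; field; rewrite gt_eqF.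
rewrite softmax_wsqE ler_wpM2l ?(ltW (wsq_weight_gt0 _ _)) //.
by rewrite lef_pV2 ?posrE ?wsq_weight_gt0 ?sum_wsq_weight_gt0 // wsq_weight_le_sum.
Qed.

Lemma softmax_excess_le x k a : pol x a * (wsq_cost x a - wsq_cost x k) <= iota.
Proof.
case: (lerP (wsq_cost x a - wsq_cost x k) 0) => hu.
  apply: le_trans (ltW iota_gt0); apply: mulr_ge0_le0 => //.
  exact: ltW (softmax_gt0 _ _).
apply: le_trans (ler_wpM2r (ltW hu) (softmax_le_ratio x a k)) _.
exact: expR_div_tradeoff.
Qed.

Lemma softmax_cost_le x k : \sum_a pol x a * wsq_cost x a <= wsq_cost x k + N%:R * iota.
Proof.
have -> : \sum_a pol x a * wsq_cost x a =
          wsq_cost x k + \sum_a pol x a * (wsq_cost x a - wsq_cost x k).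
  under [in RHS]eq_bigr do rewrite mulrBr.
  by rewrite sumrB -mulr_suml sum_softmax mul1r addrC subrK.
rewrite lerD2l; apply: le_trans (ler_sum _ (fun a _ => softmax_excess_le x k a)) _.
by rewrite sumr_const card_ord mulr_natl.
Qed.

Lemma incr_qsucc (x : qstate N) a : incr x a \in qsucc x.
Proof. by rewrite mem_cat map_f ?mem_enum. Qed.

Lemma decr_qsucc (x : qstate N) n : decr x n \in qsucc x.
Proof. by rewrite mem_cat orbC map_f ?mem_enum. Qed.

Lemma trans_op_qjump x (f : qstate N -> R) : trans_op f x =
  (lam * \sum_a pol x a * f (incr x a) + \sum_n (0 < x n)%N%:R * mu n * f (decr x n))
  / Lam x.
Proof.
rewrite /Submission.trans_op /qjump; under eq_bigr do rewrite mulrAC.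
rewrite -mulr_suml; congr (_ / _).
rewrite /qrate; under eq_bigr do rewrite mulrDl !mulr_suml.
rewrite big_split /=; congr (_ + _).
  rewrite exchange_big /= mulr_sumr; apply: eq_bigr => a _.
  rewrite (eq_bigr (fun z => (z == incr x a)%:R * (lam * pol x a * f z))); last first.
    by move=> z _; rewrite !mulrA.
  by rewrite sum_seq_indicator ?undup_uniq // mem_undup incr_qsucc mul1r mulrA.
rewrite exchange_big /=; apply: eq_bigr => n _.
case: (0 < x n)%N => /=; last by rewrite !mul0r big1 // => z _; rewrite !mul0r.
rewrite (eq_bigr (fun z => (z == decr x n)%:R * (mu n * f z))); last first.
  by move=> z _; rewrite mulrA.
by rewrite sum_seq_indicator ?undup_uniq // mem_undup decr_qsucc !mul1r.
Qed.

Lemma qjump_ge0 x z : 0 <= P x z.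
Proof.
apply: divr_ge0; last exact: ltW (total_rate_gt0 x).
apply: addr_ge0; apply: sumr_ge0 => i _; apply: mulr_ge0 => //.
- by apply: mulr_ge0; [exact: ltW | exact: ltW (softmax_gt0 x i)].
- exact: ltW.
Qed.

Lemma qjump_supp x z : z \notin qsucc x -> P x z = 0.
Proof.
move=> hz; rewrite /qjump /qrate big1 ?big1 ?addr0 ?mul0r //.
- move=> n _; case: eqP => [e|_]; last by rewrite andbF mul0r.
  by rewrite e decr_qsucc in hz.
- move=> a _; case: eqP => [e|_]; last by rewrite mul0r.
  by rewrite e incr_qsucc in hz.
Qed.

Lemma qjump_sum1 x : \sum_(z <- undup (qsucc x)) P x z = 1.
Proof.
have := trans_op_qjump x (fun _ => 1); rewrite /Submission.trans_op.
under eq_bigr do rewrite mulr1; move=> ->.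
under eq_bigr do rewrite mulr1; rewrite sum_softmax mulr1.
under eq_bigr do rewrite mulr1.
by rewrite mulfV // gt_eqF // total_rate_gt0.
Qed.

Lemma qjump_incr_gt0 (x : qstate N) a : 0 < P x (incr x a).
Proof.
apply: divr_gt0; last exact: total_rate_gt0.
rewrite /qrate (bigD1 a (P := predT)) //= eqxx mul1r.
have h1 : 0 <= \sum_(i < N | i != a) (incr x a == incr x i)%:R * (lam * pol x i).
  apply: sumr_ge0 => i _; apply: mulr_ge0 => //.
  by apply: mulr_ge0; [exact: ltW | exact: ltW (softmax_gt0 _ _)].
have h2 : 0 <= \sum_(i < N) ((0 < x i)%N && (incr x a == decr x i))%:R * mu i.
  by apply: sumr_ge0 => i _; apply: mulr_ge0 => //; exact: ltW.
have : 0 < lam * pol x a by apply: mulr_gt0 => //; exact: softmax_gt0.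
lra.
Qed.

Lemma qjump_decr_gt0 (x : qstate N) n : (0 < x n)%N -> 0 < P x (decr x n).
Proof.
move=> hn; apply: divr_gt0; last exact: total_rate_gt0.
rewrite /qrate [X in _ + X](bigD1 n) //= hn eqxx mul1r.
have h1 : 0 <= \sum_(i < N) (decr x n == incr x i)%:R * (lam * pol x i).
  apply: sumr_ge0 => i _; apply: mulr_ge0 => //.
  by apply: mulr_ge0; [exact: ltW | exact: ltW (softmax_gt0 _ _)].
have h2 : 0 <= \sum_(i < N | i != n) ((0 < x i)%N && (decr x n == decr x i))%:R * mu i.
  by apply: sumr_ge0 => i _; apply: mulr_ge0 => //; exact: ltW.
by have := mu_gt0 n; lra.
Qed.

Definition qzero : qstate N := [ffun _ => 0%N].

Lemma qzero_of_sum0 (x : qstate N) : (\sum_i x i)%N = 0%N -> x = qzero.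
Proof.
move=> hx; apply/ffunP => i; rewrite ffunE; apply/eqP.
by rewrite -leqn0 -hx (bigD1 i) //= leq_addr.
Qed.

Lemma sum_decr (x : qstate N) n : (0 < x n)%N -> (\sum_i x i = (\sum_i decr x n i).+1)%N.
Proof.
move=> hn; rewrite (bigD1 n) // [X in _ = X.+1](bigD1 n) //= ffunE eqxx.
have -> : (\sum_(i | i != n) decr x n i = \sum_(i | i != n) x i)%N.
  by apply: eq_bigr => i /negPf hi; rewrite ffunE hi subn0.
by rewrite -addSn subn1 prednK.
Qed.

Lemma incr_decr (x : qstate N) n : (0 < x n)%N -> incr (decr x n) n = x.
Proof.
move=> hn; apply/ffunP => i; rewrite !ffunE.
by case: (eqVneq i n) => [->|_] /=; [rewrite subnK | rewrite subn0 addn0].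
Qed.

(* Serve a nonempty queue (resp. refill it by an arrival) one job at a time. *)
Lemma qjump_reach_qzero k (x : qstate N) :
  (\sum_i x i)%N = k -> reach P x qzero /\ reach P qzero x.
Proof.
elim: k x => [|k IH] x hx; first by rewrite (qzero_of_sum0 hx); split; exact: reach0.
case: (pickP (fun n => 0 < x n)%N) => [n hn | h0]; last first.
  by rewrite big1 in hx => // i _; move: (h0 i) => /negbT; rewrite -leqNgt leqn0 => /eqP.
have [to0 from0] : reach P (decr x n) qzero /\ reach P qzero (decr x n).
  by apply: IH; have := sum_decr hn; rewrite hx => -[].
split; first exact: reachS (qjump_decr_gt0 hn) to0.
apply: reach_trans from0 _; rewrite -[X in reach _ _ X](incr_decr hn).
exact: reachS (qjump_incr_gt0 _ _) (reach0 _ _).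
Qed.

Lemma qjump_reach (x y : qstate N) : reach P x y.
Proof.
exact: reach_trans (qjump_reach_qzero (erefl _)).1 (qjump_reach_qzero (erefl _)).2.
Qed.

Definition qlyap (x : qstate N) : R := \sum_i w i * (x i)%:R ^+ 2.
Definition departure_gain (x : qstate N) (n : 'I_N) : R := w n * (2 * (x n)%:R - 1).

(* Generator of the CTMC applied to qlyap. *)
Definition qdrift (x : qstate N) : R :=
  lam * \sum_a pol x a * wsq_cost x a
  - \sum_n (0 < x n)%N%:R * mu n * departure_gain x n.

Lemma qlyap_ge0 x : 0 <= qlyap x.
Proof. by apply: sumr_ge0 => i _; apply: mulr_ge0; [exact: ltW | exact: sqr_ge0]. Qed.

Lemma qlyap_incr (x : qstate N) a : qlyap (incr x a) = qlyap x + wsq_cost x a.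
Proof.
rewrite /qlyap (bigD1 a) // [in RHS](bigD1 a) //= ffunE eqxx addn1.
rewrite (eq_bigr (fun i => w i * (x i)%:R ^+ 2)) => [|i /negPf hi]; last first.
  by rewrite ffunE hi addn0.
by rewrite /wsq_cost -natr1; ring.
Qed.

Lemma qlyap_decr (x : qstate N) n : (0 < x n)%N -> qlyap (decr x n) = qlyap x - departure_gain x n.
Proof.
move=> hn; rewrite /qlyap (bigD1 n) // [in RHS](bigD1 n) //= ffunE eqxx /=.
rewrite (eq_bigr (fun i => w i * (x i)%:R ^+ 2)) => [|i /negPf hi]; last first.
  by rewrite ffunE hi subn0.
by rewrite /departure_gain natrB //; ring.
Qed.

Lemma trans_op_qlyap x : trans_op qlyap x = qlyap x + qdrift x / Lam x.
Proof.
rewrite trans_op_qjump.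
have e1 : \sum_a pol x a * qlyap (incr x a) = qlyap x + \sum_a pol x a * wsq_cost x a.
  under eq_bigr do rewrite qlyap_incr mulrDr.
  by rewrite big_split /= -mulr_suml sum_softmax mul1r.
have e2 : \sum_n (0 < x n)%N%:R * mu n * qlyap (decr x n) =
   (\sum_n (0 < x n)%N%:R * mu n) * qlyap x
   - \sum_n (0 < x n)%N%:R * mu n * departure_gain x n.
  rewrite mulr_suml -sumrB; apply: eq_bigr => n _.
  case: (boolP (0 < x n)%N) => h; first by rewrite qlyap_decr // mulrBr.
  by rewrite !mul0r subr0.
rewrite e1 e2 /qdrift; have := total_rate_gt0 x; rewrite /qtotal_rate => hL.
by field; rewrite gt_eqF.
Qed.

Definition load : R := lam / \sum_n mu n.
Definition drift_const : R := lam * N%:R * iota + \sum_k mu k * w k * (load + 1).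
Definition drift_slope : R := 2 * (1 - load).

Lemma sum_mu_gt0 : 0 < \sum_n mu n.
Proof. exact: lt_trans lam_lt_mu. Qed.

Lemma load_ge0 : 0 <= load.
Proof. by apply: divr_ge0; [exact: ltW | exact: ltW sum_mu_gt0]. Qed.

Lemma drift_slope_gt0 : 0 < drift_slope.
Proof.
have : load < 1 by rewrite ltr_pdivrMr ?sum_mu_gt0 // mul1r.
by rewrite /drift_slope; lra.
Qed.

Lemma drift_const_ge0 : 0 <= drift_const.
Proof.
apply: addr_ge0.
  by apply: mulr_ge0; [apply: mulr_ge0; [exact: ltW|] | exact: ltW].
apply: sumr_ge0 => k _; apply: mulr_ge0; first by apply: mulr_ge0; exact: ltW.
by have := load_ge0; lra.
Qed.

(* Compare the arrival term with the convex combination, with weights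
   mu_k / sum mu, of the costs of joining queue k. *)
Lemma arrival_term_le x :
  lam * \sum_a pol x a * wsq_cost x a
  <= load * \sum_k mu k * wsq_cost x k + lam * N%:R * iota.
Proof.
have hM := sum_mu_gt0.
have h : (\sum_n mu n) * \sum_a pol x a * wsq_cost x a
         <= \sum_k mu k * wsq_cost x k + (\sum_n mu n) * (N%:R * iota).
  rewrite !mulr_suml -big_split /=; apply: ler_sum => k _.
  by rewrite -mulrDr; apply: ler_wpM2l; [exact: ltW | exact: softmax_cost_le].
have -> : lam * \sum_a pol x a * wsq_cost x a
          = load * ((\sum_n mu n) * \sum_a pol x a * wsq_cost x a).
  by rewrite /load; field; rewrite gt_eqF.
have -> : lam * N%:R * iota = load * ((\sum_n mu n) * (N%:R * iota)).
  by rewrite /load; field; rewrite gt_eqF.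
by rewrite -mulrDr; apply: ler_wpM2l => //; exact: load_ge0.
Qed.

Lemma qdrift_le x : qdrift x <= drift_const - drift_slope * \sum_k mu k * w k * (x k)%:R.
Proof.
have hdep : \sum_n mu n * departure_gain x n
            <= \sum_n (0 < x n)%N%:R * mu n * departure_gain x n.
  apply: ler_sum => n _; case: (boolP (0 < x n)%N) => h; first by rewrite mul1r.
  move: h; rewrite -leqNgt leqn0 => /eqP h; rewrite /departure_gain h mul0r.
  by have := mu_gt0 n; have := w_gt0 n; nra.
have e : load * \sum_k mu k * wsq_cost x k - \sum_n mu n * departure_gain x n =
    \sum_k mu k * w k * (load + 1) - drift_slope * \sum_k mu k * w k * (x k)%:R.
  rewrite !mulr_sumr -!sumrB; apply: eq_bigr => k _.
  by rewrite /wsq_cost /departure_gain /drift_slope; ring.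
by have := arrival_term_le x; rewrite /qdrift /drift_const; lra.
Qed.

Lemma qdrift_rate_le x : qdrift x / Lam x <= drift_const / lam.
Proof.
have hL := total_rate_gt0 x; rewrite ler_pdivrMr //.
have h1 : qdrift x <= drift_const.
  apply: le_trans (qdrift_le x) _; rewrite gerBl; apply: mulr_ge0.
    exact: ltW drift_slope_gt0.
  apply: sumr_ge0 => k _; apply: mulr_ge0 => //; apply: mulr_ge0; exact: ltW.
apply: le_trans h1 _; rewrite mulrAC ler_pdivlMr //.
by apply: ler_wpM2l; [exact: drift_const_ge0 | exact: lam_le_total_rate].
Qed.

Definition box_size : nat :=
  Num.bound (\sum_k (drift_const + lam + \sum_n mu n) / (drift_slope * (mu k * w k))).

Lemma qdrift_rate_out (x : qstate N) k : (box_size < x k)%N -> qdrift x / Lam x <= -1.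
Proof.
move=> hk; have hL := total_rate_gt0 x; have hl := total_rate_le x.
rewrite ler_pdivrMr // mulN1r.
have hmw : 0 < mu k * w k by apply: mulr_gt0.
have hkap := drift_slope_gt0.
have hj j : 0 <= (drift_const + lam + \sum_n mu n) / (drift_slope * (mu j * w j)).
  apply: divr_ge0; last by apply: mulr_ge0; [exact: ltW | apply: mulr_ge0; exact: ltW].
  by have := drift_const_ge0; have := sum_mu_gt0; lra.
have hK : (drift_const + lam + \sum_n mu n) / (drift_slope * (mu k * w k)) <= box_size%:R.
  apply: (le_trans _ (ltW (archi_boundP (sumr_ge0 _ (fun j _ => hj j))))).
  by rewrite [X in _ <= X](bigD1 k) //= lerDl; apply: sumr_ge0 => j _; apply: hj.
rewrite ler_pdivrMr in hK; last exact: mulr_gt0.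
have hxk : (box_size%:R : R) <= (x k)%:R by rewrite ler_nat ltnW.
have hS : mu k * w k * (x k)%:R <= \sum_j mu j * w j * (x j)%:R.
  rewrite (bigD1 k) //= lerDl; apply: sumr_ge0 => j _; apply: mulr_ge0 => //.
  by apply: mulr_ge0; exact: ltW.
have h2 : drift_slope * (mu k * w k) * box_size%:R
          <= drift_slope * \sum_j mu j * w j * (x j)%:R.
  rewrite -mulrA; apply: ler_wpM2l; first exact: ltW.
  by apply: le_trans hS; apply: ler_wpM2l => //; exact: ltW.
by have := qdrift_le x; lra.
Qed.

Definition qbox : seq (qstate N) :=
  [seq [ffun i => nat_of_ord (f i)] | f : {ffun 'I_N -> 'I_box_size.+1} <- enum {: {ffun 'I_N -> 'I_box_size.+1}}].

Lemma notin_qbox (x : qstate N) : x \notin qbox -> exists k, (box_size < x k)%N.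
Proof.
move=> xF; case: (boolP [forall k, x k <= box_size]%N) => [hbox|]; last first.
  by move/forallPn => [k]; rewrite -ltnNge; exists k.
case/negP: xF; apply/mapP; exists [ffun i => inord (x i)]; first by rewrite mem_enum.
by apply/ffunP => i; rewrite !ffunE inordK // ltnS (forallP hbox i).
Qed.

Lemma qlyap_drift_le x : trans_op qlyap x <= qlyap x + drift_const / lam.
Proof. by rewrite trans_op_qlyap lerD2l qdrift_rate_le. Qed.

Lemma qlyap_drift_out x : x \notin qbox -> trans_op qlyap x <= qlyap x - 1.
Proof.
by move=> /notin_qbox [k hk]; rewrite trans_op_qlyap lerD2l; exact: qdrift_rate_out hk.
Qed.

End WSQ.

Local Close Scope classical_set_scope.

(* The drift bound holds at every temperature, so any iota0 > 0 works. *)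
Theorem mainTheorem3 (R : realType) (N : nat) (lam : R) (mu : 'I_N -> R) :
  0 < lam -> (forall n, 0 < mu n) -> lam < \sum_(n < N) mu n ->
  forall w : 'I_N -> R, (forall a, 0 < w a) ->
  exists iota0 : R, 0 < iota0 /\
    forall iota : R, 0 < iota -> iota < iota0 ->
      [/\ irreducible (qjump lam mu w iota) (@qsucc N),
          ergodic (qjump lam mu w iota) (@qsucc N)
        & positive_harris_recurrent (qjump lam mu w iota) (@qsucc N)].
Proof.
move=> lam_gt0 mu_gt0 lam_lt_mu w w_gt0; exists 1; split=> // iota iota_gt0 _.
have N_gt0 : (0 < N)%N by apply: (lt0n_of_sum_gt0 (mu := mu)); exact: lt_trans lam_lt_mu.
apply: (positive_harris_of_foster _ _ _ (qzero N) (F := qbox lam mu w iota)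
  (V := qlyap w) (D := drift_const lam mu w iota / lam)).
- exact: qjump_ge0.
- exact: qjump_supp.
- exact: qjump_sum1.
- exact: qjump_reach.
- exact: qlyap_ge0.
- by apply: divr_ge0; [exact: drift_const_ge0 | exact: ltW].
- exact: qlyap_drift_le.
- exact: qlyap_drift_out.
Qed.
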